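(* Let $q \in C^1(\mathbb{R}^n,\mathbb{R})$ be a scalar function such that there exists $m$ with $q(\mathbf{x}) = f(x_m)\cdot \mathbf{x}_{i\neq m}^{\beta}$ for a multi-index $\beta\in\mathbb{N}_0^{n-1}$ and $f$ any function of $x_m$ that can be integrated. Set $\lambda = \left\lceil \frac{|\beta|-1}{2}\right\rceil$ and $W(\mathbf{x}) = \mathcal{A}_{x_m}^{2\lambda+2} q(\mathbf{x}) = \mathbf{x}_{i\neq m}^{\beta}\, \mathcal{A}_{x_m}^{2\lambda+2} f(x_m)$. Then $$Q(\mathbf{x}) := \sum_{p=0}^{\lambda} (-1)^p\, \partial_{x_m}^{2\lambda-2p}\, \Delta_{\setminus m}^{p} W(\mathbf{x}) = \sum_{p=0}^{\lambda} (-1)^p\, \mathcal{A}_{x_m}^{2+2p}\, \Delta_{\setminus m}^{p} q(\mathbf{x})$$ satisfies $\Delta Q = q$, where $\Delta=\sum_{i=1}^n\partial_{x_i}^2$.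
   Context: $\mathbf{x}_{i\neq m}^{\beta}$ denotes $\prod_{i\neq m} x_i^{\beta_i}$ and $|\beta|$ its total degree; $\lceil h\rceil$ is the least integer $\ge h$. The incomplete Laplacian is $\Delta_{\setminus m} f := \sum_{i\neq m}\partial_{x_i}^2 f$, with $\Delta_{\setminus m}^p$ its $p$-fold application. The antiderivative is $\mathcal{A}_{x_j} f(\mathbf{x}) := \int_{x_0}^{x_j} f(x_1,\dots,\xi_j,\dots,x_n)\,d\xi_j$ with freely chosen lower limit $x_0$, and $\mathcal{A}_{x_j}^p := \mathcal{A}_{x_j}^{p-1}\mathcal{A}_{x_j}$ (repeated integration). Zeroth powers of these operators are the identity. *)

From Stdlib Require Import Reals Lra Lia ZArith List.
From Coquelicot Require Import Coquelicot.
Import ListNotations.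
Open Scope R_scope.

(* A point of R^n is represented as x : nat -> R, coordinate i (0 <= i < n)
   being x i; coordinates >= n are never used by any object below. *)
Definition point := nat -> R.

Definition upd (x : point) (j : nat) (t : R) : point :=
  fun i => if Nat.eqb i j then t else x i.

Definition partial (j : nat) (g : point -> R) : point -> R :=
  fun x => Derive (fun t => g (upd x j t)) (x j).

Definition idx_wo (n m : nat) : list nat :=
  filter (fun i => negb (Nat.eqb i m)) (seq 0 n).

Definition laplacian (n : nat) (g : point -> R) : point -> R :=
  fun x => fold_right Rplus 0 (map (fun i => partial i (partial i g) x) (seq 0 n)).

Definition laplacian_wo (n m : nat) (g : point -> R) : point -> R :=
  fun x => fold_right Rplus 0 (map (fun i => partial i (partial i g) x) (idx_wo n m)).

Definition antider (j : nat) (x0 : R) (g : point -> R) : point -> R :=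
  fun x => RInt (fun xi => g (upd x j xi)) x0 (x j).

Definition antider1 (x0 : R) (h : R -> R) : R -> R :=
  fun t => RInt h x0 t.

Definition opow {A : Type} (p : nat) (op : A -> A) (a : A) : A := Nat.iter p op a.

Definition monomial (n m : nat) (beta : nat -> nat) (x : point) : R :=
  fold_right Rmult 1 (map (fun i => x i ^ beta i) (idx_wo n m)).

Definition mdeg (n m : nat) (beta : nat -> nat) : nat :=
  fold_right Nat.add 0%nat (map beta (idx_wo n m)).

(* ceiling of the rational a/b for integers a and b > 0: ceil(a/b) = -((-a) div b) *)
Definition zceil_div (a b : Z) : Z := (- ((- a) / b))%Z.

Definition lam (k : nat) : nat := Z.to_nat (zceil_div (Z.of_nat k - 1) 2).

Definition sum0 (N : nat) (F : nat -> R) : R :=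
  fold_right Rplus 0 (map F (seq 0 (S N))).

(* Write q = P_0(x') f(x_m) with P_0 the monomial, P_p = Δ_{\m}^p P_0 (of degree
   |β| - 2p, independent of x_m) and F_k = A^k f.  Since Δ_{\m} and ∂_{x_m}
   commute with multiplication by functions of x_m and x' respectively, both
   expressions for Q equal Σ_p (-1)^p P_p F_{2p+2}(x_m).  Each summand satisfies
   Δ(P_p F_{2p+2}) = P_p F_{2p} + P_{p+1} F_{2p+2}, so ΔQ telescopes to
   P_0 F_0 ± P_{λ+1} F_{2λ+2} = q, because 2λ+2 > |β| forces P_{λ+1} = 0. *)

From Stdlib Require Import Reals List Lia ZArith FunctionalExtensionality.
From Coquelicot Require Import Coquelicot.
Open Scope R_scope.

Local Notation lsum a l := (fold_right Rplus 0 (map a l)).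

Lemma upd_same x j t : upd x j t j = t.
Proof. unfold upd. now rewrite Nat.eqb_refl. Qed.

Lemma upd_other x j t i : i <> j -> upd x j t i = x i.
Proof. intro Hij. unfold upd. now destruct (Nat.eqb_spec i j). Qed.

Lemma upd_comm x i j s t : i <> j -> upd (upd x i t) j s = upd (upd x j s) i t.
Proof.
  intro Hij. apply functional_extensionality. intro k. unfold upd.
  destruct (Nat.eqb_spec k j), (Nat.eqb_spec k i); congruence.
Qed.

Lemma upd_id x i : upd x i (x i) = x.
Proof.
  apply functional_extensionality. intro k. unfold upd.
  destruct (Nat.eqb_spec k i); congruence.
Qed.

Lemma opow_S {A : Type} p (op : A -> A) a : opow (S p) op a = op (opow p op a).
Proof. reflexivity. Qed.

Lemma opow_ext (op : (point -> R) -> point -> R) :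
  (forall g h, (forall x, g x = h x) -> forall x, op g x = op h x) ->
  forall p g h, (forall x, g x = h x) -> forall x, opow p op g x = opow p op h x.
Proof.
  intros Hop p. induction p as [|p IH]; intros g h E x; [apply E|].
  rewrite !opow_S. now apply Hop, IH.
Qed.

Lemma partial_ext i g h : (forall x, g x = h x) -> forall x, partial i g x = partial i h x.
Proof. intros E x. unfold partial. now apply Derive_ext. Qed.

Lemma antider_ext j x0 g h : (forall x, g x = h x) -> forall x, antider j x0 g x = antider j x0 h x.
Proof. intros E x. unfold antider. now apply RInt_ext. Qed.

Lemma lsum_ext_in {A : Type} (l : list A) (a b : A -> R) :
  (forall i, In i l -> a i = b i) -> lsum a l = lsum b l.
Proof. intro E. f_equal. now apply map_ext_in. Qed.

Lemma lsum_plus {A : Type} (l : list A) (a b : A -> R) :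
  lsum (fun i => a i + b i) l = lsum a l + lsum b l.
Proof. induction l as [|i l IH]; simpl; [ring | rewrite IH; ring]. Qed.

Lemma lsum_mull {A : Type} (l : list A) (a : A -> R) c :
  lsum (fun i => c * a i) l = c * lsum a l.
Proof. induction l as [|i l IH]; simpl; [ring | rewrite IH; ring]. Qed.

Lemma lsum_mulr {A : Type} (l : list A) (a : A -> R) c :
  lsum (fun i => a i * c) l = lsum a l * c.
Proof. induction l as [|i l IH]; simpl; [ring | rewrite IH; ring]. Qed.

Lemma lsum_swap {A B : Type} (l : list A) (s : list B) (b : B -> A -> R) :
  lsum (fun i => lsum (fun p => b p i) s) l = lsum (fun p => lsum (b p) l) s.
Proof.
  induction l as [|i l IH]; simpl.
  - induction s as [|p s IH]; simpl; [ring | rewrite <- IH; ring].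
  - now rewrite IH, <- lsum_plus.
Qed.

Lemma filter_neq_notin m l : ~ In m l -> filter (fun i => negb (i =? m)) l = l.
Proof.
  induction l as [|i l IH]; simpl; intro Hm; [reflexivity|].
  destruct (Nat.eqb_spec i m); [subst; tauto | simpl; f_equal; tauto].
Qed.

Lemma lsum_remove (g : nat -> R) m l : NoDup l -> In m l ->
  lsum g l = g m + lsum g (filter (fun i => negb (i =? m)) l).
Proof.
  induction l as [|i l IH]; simpl; [tauto|]. intros Hnd Hin.
  inversion Hnd as [|? ? Hi Hl]; subst.
  destruct (Nat.eqb_spec i m) as [->|Him]; simpl.
  - now rewrite filter_neq_notin.
  - destruct Hin as [->|Hin]; [congruence|]. rewrite IH by assumption. ring.
Qed.

Lemma laplacian_ext n g h : (forall x, g x = h x) -> forall x, laplacian n g x = laplacian n h x.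
Proof. intros E x. apply lsum_ext_in. intros i _. now apply partial_ext, partial_ext. Qed.

Lemma laplacian_wo_ext n m g h :
  (forall x, g x = h x) -> forall x, laplacian_wo n m g x = laplacian_wo n m h x.
Proof. intros E x. apply lsum_ext_in. intros i _. now apply partial_ext, partial_ext. Qed.

Lemma laplacian_split n m g x : (m < n)%nat ->
  laplacian n g x = partial m (partial m g) x + laplacian_wo n m g x.
Proof.
  intro Hm. apply (lsum_remove (fun i => partial i (partial i g) x)).
  - apply seq_NoDup.
  - apply in_seq. lia.
Qed.

Lemma sum0_O F : sum0 0 F = F 0%nat.
Proof. unfold sum0. simpl. ring. Qed.

Lemma sum0_S N F : sum0 (S N) F = sum0 N F + F (S N).
Proof.
  unfold sum0. rewrite (seq_S (S N)), map_app, fold_right_app.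
  generalize (map F (seq 0 (S N))). intro l. simpl.
  induction l as [|a l IH]; simpl; [ring | rewrite IH; ring].
Qed.

Lemma sum0_ext N F G : (forall p, (p <= N)%nat -> F p = G p) -> sum0 N F = sum0 N G.
Proof. intro E. apply lsum_ext_in. intros p Hp. apply in_seq in Hp. apply E. lia. Qed.

Lemma sum0_alternating_telescope N (a : nat -> R) :
  sum0 N (fun p => (-1) ^ p * (a p + a (S p))) = a O + (-1) ^ N * a (S N).
Proof.
  induction N as [|N IH].
  - rewrite sum0_O. simpl. ring.
  - rewrite sum0_S, IH. simpl. ring.
Qed.

Section CoordinateDerivativeOfSum.
Variables (i : nat) (g : nat -> point -> R) (c : nat -> R).
Hypothesis g_ex_derive : forall p y, ex_derive (fun t => g p (upd y i t)) (y i).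

Lemma is_derive_sum0_coord N y :
  is_derive (fun t => sum0 N (fun p => c p * g p (upd y i t))) (y i)
    (sum0 N (fun p => c p * partial i (g p) y)).
Proof.
  induction N as [|N IH].
  - rewrite sum0_O. apply (is_derive_ext (fun t => c 0%nat * g 0%nat (upd y i t))).
    + intro t. now rewrite sum0_O.
    + apply is_derive_scal, Derive_correct, g_ex_derive.
  - rewrite sum0_S.
    apply (is_derive_ext (fun t => sum0 N (fun p => c p * g p (upd y i t))
                                   + c (S N) * g (S N) (upd y i t))).
    + intro t. now rewrite sum0_S.
    + apply (is_derive_plus (fun t => sum0 N (fun p => c p * g p (upd y i t)))
                            (fun t => c (S N) * g (S N) (upd y i t))); [exact IH|].
      apply is_derive_scal, Derive_correct, g_ex_derive.
Qed.

Lemma partial_sum0 N y :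
  partial i (fun x => sum0 N (fun p => c p * g p x)) y = sum0 N (fun p => c p * partial i (g p) y).
Proof. apply is_derive_unique, is_derive_sum0_coord. Qed.

End CoordinateDerivativeOfSum.

Lemma ex_derive2_sum0_coord i (g : nat -> point -> R) (c : nat -> R) N y :
  (forall p y, ex_derive (fun t => g p (upd y i t)) (y i)) ->
  (forall p y, ex_derive (fun t => partial i (g p) (upd y i t)) (y i)) ->
  ex_derive (fun t => sum0 N (fun p => c p * g p (upd y i t))) (y i) /\
  ex_derive (fun t => partial i (fun x => sum0 N (fun p => c p * g p x)) (upd y i t)) (y i).
Proof.
  intros Hg Hg'. split; [eexists; now apply is_derive_sum0_coord|].
  apply (ex_derive_ext (fun t => sum0 N (fun p => c p * partial i (g p) (upd y i t)))).
  - intro t. symmetry. now apply partial_sum0.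
  - eexists. now apply (is_derive_sum0_coord i (fun p => partial i (g p))).
Qed.

Lemma laplacian_sum0 n (g : nat -> point -> R) (c : nat -> R) N x :
  (forall p i y, ex_derive (fun t => g p (upd y i t)) (y i)) ->
  (forall p i y, ex_derive (fun t => partial i (g p) (upd y i t)) (y i)) ->
  laplacian n (fun y => sum0 N (fun p => c p * g p y)) x
  = sum0 N (fun p => c p * laplacian n (g p) x).
Proof.
  intros Hg Hg'. unfold laplacian.
  rewrite (lsum_ext_in _ _ (fun i => sum0 N (fun p => c p * partial i (partial i (g p)) x))).
  - unfold sum0. rewrite (lsum_swap _ _ (fun p i => c p * partial i (partial i (g p)) x)).
    apply lsum_ext_in. intros p _. apply lsum_mull.
  - intros i _.
    rewrite (partial_ext i _ (fun y => sum0 N (fun p => c p * partial i (g p) y)))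
      by (apply partial_sum0; auto).
    apply partial_sum0; auto.
Qed.

(* The only property of polynomials of degree at most [d] that is needed:
   [d]-fold differentiability along the axes, with constant [d]-th partials. *)
Fixpoint deg_le (d : nat) (g : point -> R) : Prop :=
  match d with
  | O => exists c, forall x, g x = c
  | S d' => (forall i x, ex_derive (fun t => g (upd x i t)) (x i)) /\
            forall i, deg_le d' (partial i g)
  end.

Lemma partial_const_fun i g c x : (forall y, g y = c) -> partial i g x = 0.
Proof.
  intro Hg. unfold partial. rewrite (Derive_ext _ (fun _ => c)) by auto.
  apply Derive_const.
Qed.

Lemma deg_le_ex_derive d g : deg_le d g -> forall i x, ex_derive (fun t => g (upd x i t)) (x i).
Proof.
  destruct d as [|d]; simpl; [|tauto].
  intros [c Hc] i x. apply (ex_derive_ext (fun _ => c)).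
  - intro t. now rewrite Hc.
  - apply ex_derive_const.
Qed.

Lemma deg_le_partial d g i : deg_le d g -> deg_le (pred d) (partial i g).
Proof.
  destruct d as [|d]; simpl; [|intros [_ Hp]; apply Hp].
  intros [c Hc]. exists 0. intro x. now apply (partial_const_fun _ _ c).
Qed.

Lemma deg_le_ext d : forall g h, (forall x, g x = h x) -> deg_le d g -> deg_le d h.
Proof.
  induction d as [|d IH]; simpl; intros g h E.
  - intros [c Hc]. exists c. intro x. now rewrite <- E.
  - intros [Hd Hp]. split.
    + intros i x. exact (ex_derive_ext _ _ _ (fun t => E (upd x i t)) (Hd i x)).
    + intro i. apply (IH (partial i g)); [now apply partial_ext | apply Hp].
Qed.

Lemma deg_le_S d g : deg_le d g -> deg_le (S d) g.
Proof.
  revert g. induction d as [|d IH]; intros g Hg.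
  - split; [exact (deg_le_ex_derive 0 g Hg) | intro i; exact (deg_le_partial 0 g i Hg)].
  - destruct Hg as [Hd Hp]. split; auto.
Qed.

Lemma deg_le_weaken d e g : (d <= e)%nat -> deg_le d g -> deg_le e g.
Proof. induction 1; auto using deg_le_S. Qed.

Lemma deg_le_const d c : deg_le d (fun _ => c).
Proof. apply (deg_le_weaken 0); [lia | now exists c]. Qed.

Lemma deg_le_plus d : forall g h, deg_le d g -> deg_le d h -> deg_le d (fun x => g x + h x).
Proof.
  induction d as [|d IH]; simpl; intros g h.
  - intros [a Ha] [b Hb]. exists (a + b). intro x. now rewrite Ha, Hb.
  - intros [Gd Gp] [Hd Hp]. split.
    + intros i x.
      apply (ex_derive_plus (fun t => g (upd x i t)) (fun t => h (upd x i t))); auto.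
    + intro i. apply (deg_le_ext _ (fun x => partial i g x + partial i h x)); [|auto].
      intro x. symmetry.
      apply (Derive_plus (fun t => g (upd x i t)) (fun t => h (upd x i t))); auto.
Qed.

Lemma deg_le_scal d : forall g c, deg_le d g -> deg_le d (fun x => c * g x).
Proof.
  induction d as [|d IH]; simpl; intros g c.
  - intros [a Ha]. exists (c * a). intro x. now rewrite Ha.
  - intros [Gd Gp]. split.
    + intros i x. now apply ex_derive_scal.
    + intro i. apply (deg_le_ext _ (fun x => c * partial i g x)); [|auto].
      intro x. symmetry. apply Derive_scal.
Qed.

Lemma deg_le_mult d : forall a b g h, (a + b <= d)%nat ->
  deg_le a g -> deg_le b h -> deg_le d (fun x => g x * h x).
Proof.
  induction d as [|d IH]; intros a b g h Hab Hg Hh.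
  - assert (a = 0%nat) by lia. assert (b = 0%nat) by lia. subst.
    destruct Hg as [c Hc], Hh as [e He]. exists (c * e). intro x. now rewrite Hc, He.
  - destruct a as [|a].
    + destruct Hg as [c Hc]. apply (deg_le_ext _ (fun x => c * h x)).
      * intro x. now rewrite Hc.
      * apply deg_le_scal, (deg_le_weaken b); [lia | exact Hh].
    + destruct b as [|b].
      * destruct Hh as [c Hc]. apply (deg_le_ext _ (fun x => c * g x)).
        -- intro x. rewrite Hc. ring.
        -- apply deg_le_scal, (deg_le_weaken (S a)); [lia | exact Hg].
      * split.
        -- intros i x. apply ex_derive_mult; eapply deg_le_ex_derive; eauto.
        -- intro i.
           apply (deg_le_ext _ (fun x => partial i g x * h x + g x * partial i h x)).
           ++ intro x. symmetry. unfold partial.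
              rewrite (Derive_mult (fun t => g (upd x i t)) (fun t => h (upd x i t))),
                upd_id by (eapply deg_le_ex_derive; eauto).
              reflexivity.
           ++ apply deg_le_plus.
              ** apply (IH a (S b)); [lia | exact (deg_le_partial (S a) g i Hg) | exact Hh].
              ** apply (IH (S a) b); [lia | exact Hg | exact (deg_le_partial (S b) h i Hh)].
Qed.

Lemma deg_le_coord j : deg_le 1 (fun x => x j).
Proof.
  split.
  - intros i x. unfold upd. destruct (j =? i); [apply ex_derive_id | apply ex_derive_const].
  - intro i. exists (if j =? i then 1 else 0). intro x. unfold partial, upd.
    destruct (j =? i); [apply Derive_id | apply Derive_const].
Qed.

Lemma deg_le_pow j k : deg_le k (fun x => x j ^ k).
Proof.
  induction k as [|k IH]; [now exists 1|].
  exact (deg_le_mult (S k) 1 k _ _ (le_n _) (deg_le_coord j) IH).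
Qed.

Lemma deg_le_prod_pow (beta : nat -> nat) l :
  deg_le (fold_right Nat.add 0%nat (map beta l))
    (fun x => fold_right Rmult 1 (map (fun i => x i ^ beta i) l)).
Proof.
  induction l as [|i l IH]; [now exists 1|].
  exact (deg_le_mult _ _ _ _ _ (le_n _) (deg_le_pow i (beta i)) IH).
Qed.

Lemma deg_le_lsum {A : Type} d (l : list A) (a : A -> point -> R) :
  (forall i, In i l -> deg_le d (a i)) -> deg_le d (fun x => lsum (fun i => a i x) l).
Proof.
  induction l as [|i l IH]; simpl; intro Ha; [apply deg_le_const|].
  apply deg_le_plus; auto.
Qed.

Lemma deg_le_laplacian_wo n m d g : deg_le d g -> deg_le (d - 2) (laplacian_wo n m g).
Proof.
  intro Hg. replace (d - 2)%nat with (pred (pred d)) by lia.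
  apply (deg_le_lsum _ _ (fun i => partial i (partial i g))).
  intros i _. now apply deg_le_partial, deg_le_partial.
Qed.

Lemma laplacian_wo_deg_le1 n m g x : deg_le 1 g -> laplacian_wo n m g x = 0.
Proof.
  intro Hg. unfold laplacian_wo.
  rewrite (lsum_ext_in _ _ (fun _ => 0)).
  - induction (idx_wo n m) as [|i l IH]; simpl; [reflexivity | rewrite IH; ring].
  - intros i _. destruct (deg_le_partial 1 g i Hg) as [c Hc].
    exact (partial_const_fun _ _ c _ Hc).
Qed.

Definition indep (m : nat) (g : point -> R) : Prop := forall x s, g (upd x m s) = g x.

Definition sep_prod (m : nat) (P : point -> R) (H : R -> R) : point -> R :=
  fun y => P y * H (y m).

Section SeparatedProducts.
Variables n m : nat.

Lemma in_idx_wo_neq i : In i (idx_wo n m) -> i <> m.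
Proof.
  unfold idx_wo. rewrite filter_In. intros [_ Hi].
  destruct (Nat.eqb_spec i m); simpl in Hi; congruence.
Qed.

Lemma indep_partial i g : i <> m -> indep m g -> indep m (partial i g).
Proof.
  intros Him Hg x s. unfold partial. rewrite upd_other by exact Him.
  apply Derive_ext. intro t. rewrite upd_comm by congruence. apply Hg.
Qed.

Lemma indep_laplacian_wo g : indep m g -> indep m (laplacian_wo n m g).
Proof.
  intros Hg x s. apply lsum_ext_in. intros i Hi. apply in_idx_wo_neq in Hi.
  now apply indep_partial, indep_partial.
Qed.

Lemma indep_iter_laplacian_wo p g : indep m g -> indep m (opow p (laplacian_wo n m) g).
Proof. intro Hg. induction p as [|p IH]; [exact Hg | now apply indep_laplacian_wo]. Qed.

Lemma indep_monomial beta : indep m (monomial n m beta).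
Proof.
  intros x s. unfold monomial. f_equal. apply map_ext_in. intros i Hi.
  now rewrite upd_other by now apply in_idx_wo_neq.
Qed.

Lemma sep_prod_upd_other (P : point -> R) (H : R -> R) i y t : i <> m -> sep_prod m P H (upd y i t) = H (y m) * P (upd y i t).
Proof. intro Him. unfold sep_prod. rewrite upd_other by congruence. ring. Qed.

Lemma sep_prod_upd_same (P : point -> R) (H : R -> R) y t : indep m P -> sep_prod m P H (upd y m t) = P y * H t.
Proof. intro HP. unfold sep_prod. now rewrite HP, upd_same. Qed.

Lemma partial_sep_prod_other (P : point -> R) (H : R -> R) i y : i <> m ->
  partial i (sep_prod m P H) y = sep_prod m (partial i P) H y.
Proof.
  intro Him. unfold partial at 1.
  rewrite (Derive_ext _ _ _ (fun t => sep_prod_upd_other P H i y t Him)), Derive_scal.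
  unfold sep_prod, partial. ring.
Qed.

Lemma partial_sep_prod_same (P : point -> R) (H : R -> R) y : indep m P ->
  partial m (sep_prod m P H) y = sep_prod m P (Derive H) y.
Proof.
  intro HP. unfold partial.
  rewrite (Derive_ext _ _ _ (fun t => sep_prod_upd_same P H y t HP)). apply Derive_scal.
Qed.

Lemma laplacian_wo_sep_prod (P : point -> R) (H : R -> R) y :
  laplacian_wo n m (sep_prod m P H) y = sep_prod m (laplacian_wo n m P) H y.
Proof.
  unfold laplacian_wo at 2, sep_prod at 2. rewrite <- lsum_mulr.
  apply lsum_ext_in. intros i Hi. apply in_idx_wo_neq in Hi.
  rewrite (partial_ext i _ _ (fun z => partial_sep_prod_other P H i z Hi)).
  now apply partial_sep_prod_other.
Qed.

Lemma laplacian_sep_prod (P : point -> R) (H : R -> R) y : (m < n)%nat -> indep m P ->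
  laplacian n (sep_prod m P H) y
  = P y * Derive (Derive H) (y m) + laplacian_wo n m P y * H (y m).
Proof.
  intros Hmn HP. rewrite (laplacian_split n m) by exact Hmn. rewrite laplacian_wo_sep_prod.
  rewrite (partial_ext m _ _ (fun z => partial_sep_prod_same P H z HP)).
  now rewrite partial_sep_prod_same.
Qed.

Lemma ex_derive_sep_prod (P : point -> R) (H : R -> R) i y : indep m P ->
  (i <> m -> ex_derive (fun t => P (upd y i t)) (y i)) -> (i = m -> ex_derive H (y m)) ->
  ex_derive (fun t => sep_prod m P H (upd y i t)) (y i).
Proof.
  intros HP HPi HH. destruct (Nat.eq_dec i m) as [->|Him].
  - apply (ex_derive_ext (fun t => P y * H t)).
    + intro t. now rewrite sep_prod_upd_same.
    + now apply ex_derive_scal, HH.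
  - apply (ex_derive_ext (fun t => H (y m) * P (upd y i t))).
    + intro t. now rewrite sep_prod_upd_other.
    + now apply ex_derive_scal, HPi.
Qed.

Lemma iter_laplacian_wo_sep_prod (P : point -> R) (H : R -> R) p y :
  opow p (laplacian_wo n m) (sep_prod m P H) y = sep_prod m (opow p (laplacian_wo n m) P) H y.
Proof.
  revert y. induction p as [|p IH]; intro y; [reflexivity|].
  rewrite !opow_S, (laplacian_wo_ext _ _ _ _ IH). apply laplacian_wo_sep_prod.
Qed.

Lemma iter_partial_sep_prod_same (P : point -> R) (H : R -> R) j y : indep m P ->
  opow j (partial m) (sep_prod m P H) y = sep_prod m P (opow j Derive H) y.
Proof.
  intro HP. revert y. induction j as [|j IH]; intro y; [reflexivity|].
  rewrite !opow_S, (partial_ext _ _ _ IH). now apply partial_sep_prod_same.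
Qed.

End SeparatedProducts.

Lemma ex_derive_partial_sep_prod m (P : point -> R) (H : R -> R) i y : indep m P ->
  (i <> m -> ex_derive (fun t => partial i P (upd y i t)) (y i)) -> ex_derive (Derive H) (y m) ->
  ex_derive (fun t => partial i (sep_prod m P H) (upd y i t)) (y i).
Proof.
  intros HP HPi HH. destruct (Nat.eq_dec i m) as [->|Him].
  - apply (ex_derive_ext (fun t => sep_prod m P (Derive H) (upd y m t))).
    + intro t. symmetry. now apply partial_sep_prod_same.
    + apply ex_derive_sep_prod; [exact HP | congruence | auto].
  - apply (ex_derive_ext (fun t => sep_prod m (partial i P) H (upd y i t))).
    + intro t. symmetry. now apply partial_sep_prod_other.
    + apply ex_derive_sep_prod; [now apply indep_partial | exact HPi | congruence].
Qed.

Section IteratedAntiderivatives.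
Variable x0 : R.

Lemma is_derive_antider1 h : (forall t, continuous h t) ->
  forall t, is_derive (antider1 x0 h) t (h t).
Proof.
  intros Hh t. apply (is_derive_RInt h (antider1 x0 h) x0 t); [|apply Hh].
  apply filter_forall. intro b. apply (RInt_correct (V := R_CompleteNormedModule)).
  apply (ex_RInt_continuous (V := R_CompleteNormedModule)). intros; apply Hh.
Qed.

Lemma continuous_iter_antider1 k h : (forall t, continuous h t) ->
  forall t, continuous (opow k (antider1 x0) h) t.
Proof.
  intro Hh. induction k as [|k IH]; intro t; [apply Hh|].
  apply (ex_derive_continuous (V := R_NormedModule)). eexists.
  rewrite opow_S. now apply is_derive_antider1.
Qed.

Lemma is_derive_iter_antider1 k h : (forall t, continuous h t) ->
  forall t, is_derive (opow (S k) (antider1 x0) h) t (opow k (antider1 x0) h t).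
Proof. intros Hh t. rewrite opow_S. now apply is_derive_antider1, continuous_iter_antider1. Qed.

Lemma Derive_iter_antider1 k h : (forall t, continuous h t) ->
  forall t, Derive (opow (S k) (antider1 x0) h) t = opow k (antider1 x0) h t.
Proof. intros Hh t. now apply is_derive_unique, is_derive_iter_antider1. Qed.

Lemma iter_Derive_iter_antider1 j k h : (forall t, continuous h t) -> (j <= k)%nat ->
  forall t, opow j Derive (opow k (antider1 x0) h) t = opow (k - j) (antider1 x0) h t.
Proof.
  intro Hh. induction j as [|j IH]; intros Hjk t; [now rewrite Nat.sub_0_r|].
  rewrite opow_S, (Derive_ext _ _ _ (IH ltac:(lia))).
  replace (k - j)%nat with (S (k - S j)) by lia.
  now apply Derive_iter_antider1.
Qed.

Lemma antider_sep_prod m P H y : indep m P -> (forall b, ex_RInt H x0 b) ->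
  antider m x0 (sep_prod m P H) y = sep_prod m P (antider1 x0 H) y.
Proof.
  intros HP HH. unfold antider, antider1, sep_prod.
  rewrite (RInt_ext _ (fun t => scal (P y) (H t))).
  - now rewrite (RInt_scal (V := R_CompleteNormedModule)).
  - intros t _. now rewrite HP, upd_same.
Qed.

Lemma iter_antider_sep_prod m P h k y : indep m P -> (forall t, continuous h t) ->
  opow k (antider m x0) (sep_prod m P h) y = sep_prod m P (opow k (antider1 x0) h) y.
Proof.
  intros HP Hh. revert y. induction k as [|k IH]; intro y; [reflexivity|].
  rewrite !opow_S, (antider_ext _ _ _ _ IH). apply antider_sep_prod; [exact HP|].
  intro b. apply (ex_RInt_continuous (V := R_CompleteNormedModule)).
  intros. now apply continuous_iter_antider1.
Qed.

End IteratedAntiderivatives.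

Lemma lam_bound k : (k <= 2 * lam k + 1)%nat.
Proof.
  unfold lam, zceil_div.
  set (w := ((- (Z.of_nat k - 1)) / 2)%Z).
  assert (Hdiv := Z.div_mod (- (Z.of_nat k - 1)) 2 ltac:(lia)).
  assert (Hmod := Z.mod_pos_bound (- (Z.of_nat k - 1)) 2 ltac:(lia)).
  fold w in Hdiv.
  assert (Z.of_nat (Z.to_nat (- w)) = - w)%Z by (apply Z2Nat.id; lia).
  lia.
Qed.

Section Corollary.
Variables (n m : nat) (beta : nat -> nat) (f : R -> R) (x0 : R).

Definition lap_monomial p := opow p (laplacian_wo n m) (monomial n m beta).
Definition antider_f k := opow k (antider1 x0) f.
Definition Q_summand p := sep_prod m (lap_monomial p) (antider_f (2 + 2 * p)).

Lemma indep_lap_monomial p : indep m (lap_monomial p).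
Proof. apply indep_iter_laplacian_wo, indep_monomial. Qed.

Lemma deg_le_lap_monomial p : deg_le (mdeg n m beta - 2 * p) (lap_monomial p).
Proof.
  induction p as [|p IH].
  - rewrite Nat.sub_0_r. exact (deg_le_prod_pow beta (idx_wo n m)).
  - replace (mdeg n m beta - 2 * S p)%nat with (mdeg n m beta - 2 * p - 2)%nat by lia.
    now apply deg_le_laplacian_wo.
Qed.

Lemma lap_monomial_vanishes x : lap_monomial (S (lam (mdeg n m beta))) x = 0.
Proof.
  apply laplacian_wo_deg_le1.
  apply (deg_le_weaken (mdeg n m beta - 2 * lam (mdeg n m beta))).
  - pose proof (lam_bound (mdeg n m beta)). lia.
  - apply deg_le_lap_monomial.
Qed.

Hypothesis f_cont : forall t, continuous f t.

Lemma iter_antider_source k x :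
  opow k (antider m x0) (fun y => f (y m) * monomial n m beta y) x
  = sep_prod m (monomial n m beta) (antider_f k) x.
Proof.
  rewrite (opow_ext _ (antider_ext m x0) k _ (sep_prod m (monomial n m beta) f)).
  - apply iter_antider_sep_prod; [apply indep_monomial | exact f_cont].
  - intro y. unfold sep_prod. ring.
Qed.

Lemma Q1_summand l p x : (p <= l)%nat ->
  opow (2 * l - 2 * p) (partial m) (opow p (laplacian_wo n m)
    (opow (2 * l + 2) (antider m x0) (fun y => f (y m) * monomial n m beta y))) x
  = Q_summand p x.
Proof.
  intro Hpl.
  rewrite (opow_ext _ (partial_ext m) _ _ (sep_prod m (lap_monomial p) (antider_f (2 * l + 2)))).
  - rewrite iter_partial_sep_prod_same by apply indep_lap_monomial.
    unfold Q_summand, sep_prod, antider_f.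
    rewrite iter_Derive_iter_antider1 by (exact f_cont || lia).
    now replace (2 * l + 2 - (2 * l - 2 * p))%nat with (2 + 2 * p)%nat by lia.
  - intro y.
    rewrite (opow_ext _ (laplacian_wo_ext n m) _ _
               (sep_prod m (monomial n m beta) (antider_f (2 * l + 2))))
      by apply iter_antider_source.
    apply iter_laplacian_wo_sep_prod.
Qed.

Lemma Q2_summand p x :
  opow (2 + 2 * p) (antider m x0)
    (opow p (laplacian_wo n m) (fun y => f (y m) * monomial n m beta y)) x
  = Q_summand p x.
Proof.
  rewrite (opow_ext _ (antider_ext m x0) _ _ (sep_prod m (lap_monomial p) f)).
  - apply iter_antider_sep_prod; [apply indep_lap_monomial | exact f_cont].
  - intro y.
    rewrite (opow_ext _ (laplacian_wo_ext n m) _ _ (sep_prod m (monomial n m beta) f))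
      by (intro z; unfold sep_prod; ring).
    apply iter_laplacian_wo_sep_prod.
Qed.

Lemma ex_derive_Q_summand p i y : ex_derive (fun t => Q_summand p (upd y i t)) (y i).
Proof.
  apply ex_derive_sep_prod; [apply indep_lap_monomial | intros _ | intros _].
  - eapply deg_le_ex_derive, deg_le_lap_monomial.
  - eexists. now apply is_derive_iter_antider1.
Qed.

Lemma ex_derive_partial_Q_summand p i y :
  ex_derive (fun t => partial i (Q_summand p) (upd y i t)) (y i).
Proof.
  apply ex_derive_partial_sep_prod; [apply indep_lap_monomial | intros _ | ].
  - eapply deg_le_ex_derive, deg_le_partial, deg_le_lap_monomial.
  - apply (ex_derive_ext (antider_f (1 + 2 * p))).
    + intro t. symmetry. now apply Derive_iter_antider1.
    + eexists. now apply is_derive_iter_antider1.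
Qed.

Hypothesis m_lt_n : (m < n)%nat.

Lemma laplacian_Q_summand p x :
  laplacian n (Q_summand p) x
  = lap_monomial p x * antider_f (2 * p) (x m)
    + lap_monomial (S p) x * antider_f (2 * S p) (x m).
Proof.
  unfold Q_summand. rewrite laplacian_sep_prod by (exact m_lt_n || apply indep_lap_monomial).
  replace (2 * S p)%nat with (2 + 2 * p)%nat by lia.
  f_equal. f_equal. unfold antider_f.
  rewrite (Derive_ext _ _ _ (Derive_iter_antider1 x0 (S (2 * p)) f f_cont)).
  now apply Derive_iter_antider1.
Qed.

Lemma laplacian_sum_Q_summand x :
  laplacian n (fun y => sum0 (lam (mdeg n m beta)) (fun p => (-1) ^ p * Q_summand p y)) x
  = f (x m) * monomial n m beta x.
Proof.
  rewrite laplacian_sum0 by (apply ex_derive_Q_summand || apply ex_derive_partial_Q_summand).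
  set (a := fun p => lap_monomial p x * antider_f (2 * p) (x m)).
  rewrite (sum0_ext _ _ (fun p => (-1) ^ p * (a p + a (S p))))
    by (intros p _; now rewrite laplacian_Q_summand).
  rewrite sum0_alternating_telescope. unfold a. rewrite lap_monomial_vanishes.
  simpl. ring.
Qed.

End Corollary.

Theorem corollary5p2 (n m : nat) (beta : nat -> nat) (f : R -> R) (x0 : R) :
  (m < n)%nat ->
  (* q = f(x_m) x^beta is C^1 on R^n, i.e. f is C^1 *)
  (forall t, ex_derive f t) ->
  (forall t, continuous (Derive f) t) ->
  let q : point -> R := fun x => f (x m) * monomial n m beta x in
  let l := lam (mdeg n m beta) in
  let W : point -> R := opow (2 * l + 2) (antider m x0) q in
  let Q1 : point -> R := fun x =>
    sum0 l (fun p => (-1) ^ p *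
      opow (2 * l - 2 * p) (partial m) (opow p (laplacian_wo n m) W) x) in
  let Q2 : point -> R := fun x =>
    sum0 l (fun p => (-1) ^ p *
      opow (2 + 2 * p) (antider m x0) (opow p (laplacian_wo n m) q) x) in
  (forall x, W x = monomial n m beta x * opow (2 * l + 2) (antider1 x0) f (x m)) /\
  (forall x, Q1 x = Q2 x) /\
  (forall x,
     (forall i, (i < n)%nat ->
        ex_derive (fun t => Q1 (upd x i t)) (x i) /\
        ex_derive (fun t => partial i Q1 (upd x i t)) (x i)) /\
     laplacian n Q1 x = q x).
Proof.
  (* only the continuity of [f] is used *)
  intros Hmn Hf _ q l W Q1 Q2.
  assert (f_cont : forall t, continuous f t)
    by (intro t; now apply (ex_derive_continuous (V := R_NormedModule))).
  set (Qsum := fun x => sum0 l (fun p => (-1) ^ p * Q_summand n m beta f x0 p x)).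
  assert (Q1_sum : forall x, Q1 x = Qsum x).
  { intro x. apply sum0_ext. intros p Hp. f_equal. now apply Q1_summand. }
  split; [|split].
  - intro x. now apply iter_antider_source.
  - intro x. rewrite Q1_sum. apply sum0_ext. intros p _. f_equal. symmetry.
    now apply Q2_summand.
  - intro x. split.
    + intros i _.
      destruct (ex_derive2_sum0_coord i (Q_summand n m beta f x0) (fun p => (-1) ^ p) l x
                  (fun p y => ex_derive_Q_summand _ _ _ _ _ f_cont p i y)
                  (fun p y => ex_derive_partial_Q_summand _ _ _ _ _ f_cont p i y))
        as [HQ HdQ].
      split.
      * exact (ex_derive_ext _ _ _ (fun t => eq_sym (Q1_sum (upd x i t))) HQ).
      * exact (ex_derive_ext _ _ _ (fun t => eq_sym (partial_ext i _ _ Q1_sum (upd x i t))) HdQ).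
    + rewrite (laplacian_ext n _ _ Q1_sum). now apply laplacian_sum_Q_summand.
Qed.
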